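(* Let $q$ be a prime power, let $n>1$ and $k\ge 1$ be integers with $\gcd(n,k)=1$, and let $f(x)$ be an irreducible polynomial of degree $n$ over $\mathbb{F}_q$. Let $\alpha,\beta\in\mathbb{F}_{q^k}$ with $\alpha\neq 0$, and set $g(x):=f(\alpha x+\beta)\in\mathbb{F}_{q^k}[x]$. Then the polynomial $$F(x)=\prod_{a=0}^{k-1} g^{(a)}(x),$$ which has degree $nk$ and coefficients in $\mathbb{F}_q$, is irreducible over $\mathbb{F}_q$ if and only if $\mathbb{F}_q(\alpha,\beta)=\mathbb{F}_{q^k}$.
   Context: For a polynomial $g(x)=\sum_{u=0}^{m} b_u x^u$ with coefficients in $\mathbb{F}_{q^k}$ and an integer $a\ge 0$, write $g^{(a)}(x)=\sum_{u=0}^{m} b_u^{q^a}x^u$. $\mathbb{F}_q(\alpha,\beta)$ denotes the smallest subfield of $\mathbb{F}_{q^k}$ containing $\mathbb{F}_q$, $\alpha$ and $\beta$. *)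

From HB Require Import structures.
From mathcomp Require Import all_boot all_order all_algebra all_field.
Set Implicit Arguments. Unset Strict Implicit. Unset Printing Implicit Defensive.
Import GRing.Theory.
Local Open Scope ring_scope.

(* g^(a): raise every coefficient of g to the power q^a, where q = #|F|. *)
Definition frob_poly (F : finFieldType) (L : fieldExtType F) (a : nat)
  (g : {poly L}) : {poly L} :=
  map_poly (fun c : L => c ^+ (#|F| ^ a)%N) g.

From HB Require Import structures.
From mathcomp Require Import all_boot all_order all_algebra all_field.
Set Implicit Arguments. Unset Strict Implicit. Unset Printing Implicit Defensive.
Import GRing.Theory.
Local Open Scope ring_scope.

(* Let theta be a root of f in an extension E of L, and x := (theta - beta) / alpha,
   a root of g and hence of FF.  Suppose F_q(alpha, beta) = L and x^(q^e) = x.  Then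
   z |-> z^(q^e) acts on theta = alpha x + beta as theta |-> u theta + w with u, w in L;
   comparing with its action on theta^q shows that u and w are also fixed by q^n-th
   powers, hence lie in F_q, and then u^n = u^k = 1, n w = k w = 0 force u = 1, w = 0.
   Thus theta, alpha and beta are fixed as well, so n | e and k | e: the degree of x is
   a multiple of nk = deg FF, and FF is the minimal polynomial of x.
   Conversely, if FF is irreducible then x has degree nk; for d = [F_q(alpha, beta) : F_q]
   the power z |-> z^(q^(dn)) fixes alpha, beta and theta, hence x, so nk | dn, k <= d. *)


Lemma nat_subgroup_gcdn (P : nat -> Prop) m l :
  (forall a b, P a -> P b -> P (a + b)%N) ->
  (forall a b, P a -> P (a + b)%N -> P b) ->
  P m -> P l -> P (gcdn m l).
Proof.
move=> PD PB Pm Pl; have [->|m_gt0] := posnP m; first by rewrite gcd0n.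
have P0 : P 0 by apply: (PB m); rewrite ?addn0.
have PM c a : P a -> P (c * a)%N.
  by move=> Pa; elim: c => [|c IHc]; rewrite ?mul0n // mulSn; apply: PD.
have [a _ /dvdnP[c Dc]] := Bezoutl l m_gt0.
apply: (PB (a * l)%N); first exact: PM.
by rewrite addnC Dc; apply: PM.
Qed.

Lemma expr_gcdn_eq1 (R : pzSemiRingType) (u : R) m l :
  u ^+ m = 1 -> u ^+ l = 1 -> u ^+ gcdn m l = 1.
Proof.
apply: (@nat_subgroup_gcdn (fun e => u ^+ e = 1)) => [a b ua ub | a b ua].
  by rewrite exprD ua ub mulr1.
by rewrite exprD ua mul1r.
Qed.

Lemma mulrn_gcdn_eq0 (V : nmodType) (w : V) m l :
  w *+ m = 0 -> w *+ l = 0 -> w *+ gcdn m l = 0.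
Proof.
apply: (@nat_subgroup_gcdn (fun e => w *+ e = 0)) => [a b wa wb | a b wa].
  by rewrite mulrnDr wa wb addr0.
by rewrite mulrnDr wa add0r.
Qed.

Section Frobenius.

Variables (F : finFieldType) (K : fieldExtType F).
Local Notation q := #|F|.

Definition frob (m : nat) (x : K) := x ^+ (q ^ m).

Lemma frob0 x : frob 0 x = x. Proof. by rewrite /frob expr1. Qed.

Lemma frobD m1 m2 x : frob (m1 + m2) x = frob m1 (frob m2 x).
Proof. by rewrite /frob expnD mulnC exprM. Qed.

Lemma frobC m1 m2 x : frob m1 (frob m2 x) = frob m2 (frob m1 x).
Proof. by rewrite -!frobD addnC. Qed.

Lemma pchar_nat_card : [pchar K].-nat q.
Proof.
have [p p_pr pcharFp] := finPcharP F.
have pcharKp : p \in [pchar K] by rewrite (pchar_lalg K).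
rewrite (eq_pnat _ (pcharf_eq pcharKp)) (card_pprimeChar pcharFp) pnatX.
by rewrite pnat_id.
Qed.

Lemma frob_is_zmod_morphism m : zmod_morphism (frob m).
Proof.
have qm_pchar : [pchar K].-nat (q ^ m)%N by rewrite pnatX pchar_nat_card.
by move=> x y; rewrite /frob exprDn_pchar // exprNn_pchar.
Qed.

Lemma frob_is_monoid_morphism m : monoid_morphism (frob m).
Proof. by rewrite /frob; split=> [|x y]; rewrite ?exprMn ?expr1n. Qed.

HB.instance Definition _ m :=
  GRing.isZmodMorphism.Build _ _ (frob m) (frob_is_zmod_morphism m).
HB.instance Definition _ m :=
  GRing.isMonoidMorphism.Build _ _ (frob m) (frob_is_monoid_morphism m).

Lemma frob_alg m (a : F) : frob m a%:A = a%:A.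
Proof.
elim: m => [|m IHm]; first by rewrite frob0.
by rewrite -addn1 frobD [frob 1 _]/frob expn1 -in_algE -rmorphXn expf_card.
Qed.

Lemma frob_fix_mull m c x : frob m x = x -> frob (c * m) x = x.
Proof.
by move=> fx; elim: c => [|c IHc]; rewrite ?mul0n ?frob0 // mulSn frobD IHc fx.
Qed.

Lemma frob_fix_gcdn m l x :
  frob m x = x -> frob l x = x -> frob (gcdn m l) x = x.
Proof.
apply: (@nat_subgroup_gcdn (fun e => frob e x = x)) => [a b xa xb | a b xa].
  by rewrite frobD xb xa.
by rewrite frobD -{2}xa => /fmorph_inj.
Qed.

Lemma frob_fix_coprime m l x :
  coprime m l -> frob m x = x -> frob l x = x -> frob 1 x = x.
Proof. by move=> /eqP <-; apply: frob_fix_gcdn. Qed.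

Lemma frob_modn m l x : frob l x = x -> frob m x = frob (m %% l) x.
Proof. by move=> fx; rewrite {1}(divn_eq m l) addnC frobD frob_fix_mull. Qed.

Lemma frob_iter_scale m c z j :
  frob m c = c -> frob m z = c * z -> frob (j * m) z = c ^+ j * z.
Proof.
move=> fc fz; elim: j => [|j IHj]; first by rewrite mul0n frob0 expr0 mul1r.
by rewrite mulSn frobD IHj rmorphM rmorphXn /= fc fz exprS mulrCA mulrA.
Qed.

Lemma frob_iter_shift m w z j :
  frob m w = w -> frob m z = z + w -> frob (j * m) z = z + w *+ j.
Proof.
move=> fw fz; elim: j => [|j IHj]; first by rewrite mul0n frob0 mulr0n addr0.
by rewrite mulSn frobD IHj rmorphD rmorphMn /= fw fz mulrS addrA.
Qed.

Lemma frob_fix_adjoin m (U : {subfield K}) x :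
  {in U, forall y, frob m y = y} -> frob m x = x ->
  {in <<U; x>>%VS, forall y, frob m y = y}.
Proof.
move=> fixU fx _ /Fadjoin_polyP[p /polyOverP Up ->].
rewrite -horner_map /= fx map_poly_id // => _ /(nthP 0)[i _ <-].
exact: fixU.
Qed.

Lemma dim_leq_frob_fix (V : {vspace K}) m : (0 < m)%N ->
  {in V, forall y, frob m y = y} -> (\dim V <= m)%N.
Proof.
move=> m_gt0 fixV; pose T := finvect_type K.
have q_gt1 : (1 < q)%N := finNzRing_gt1 F.
rewrite -(leq_exp2l _ _ q_gt1) -(@card_vspace F T _ V) cardE.
have qm_gt1 : (1 < q ^ m)%N by rewrite -{1}(expn0 q) ltn_exp2l.
pose P : {poly K} := 'X^(q ^ m) - 'X.
have sizeP : size P = (q ^ m).+1.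
  by rewrite size_polyDl ?size_polyXn // size_polyN size_polyX ltnS.
have nzP : P != 0 by rewrite -size_poly_eq0 sizeP.
rewrite -ltnS -sizeP.
apply: (max_poly_roots nzP (rs := enum (mem (V : {vspace T})) : seq K)) _ (enum_uniq _).
apply/allP => y; rewrite (@mem_enum T) => /fixV Vy.
by rewrite /root !hornerE -[y ^+ _]/(frob m y) Vy subrr.
Qed.

Lemma frob_fixed_subfieldP (V : {subfield K}) m :
  {in V, forall y, frob m y = y} <-> (\dim V %| m)%N.
Proof.
have fixV : {in V, forall y, frob (\dim V) y = y}.
  by move=> y; rewrite Fermat's_little_theorem => /eqP.
split=> [fixVm | /dvdnP[c ->] y /fixV]; last exact: frob_fix_mull.
have gcd_gt0 : (0 < gcdn (\dim V) m)%N by rewrite gcdn_gt0 adim_gt0.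
have /dim_leq_frob_fix : {in V, forall y, frob (gcdn (\dim V) m) y = y}.
  by move=> y Vy; apply: frob_fix_gcdn; [apply: fixV | apply: fixVm].
move=> /(_ gcd_gt0) le_dim_gcd; apply/gcdn_idPl/eqP.
by rewrite eqn_leq le_dim_gcd dvdn_leq ?adim_gt0 ?dvdn_gcdl.
Qed.

Lemma mem1_frob (x : K) : (x \in 1%VS) = (frob 1 x == x).
Proof. by rewrite Fermat's_little_theorem dimv1. Qed.

Lemma frob_dim_full (x : K) : frob (\dim {:K}) x = x.
Proof. by apply/eqP; rewrite -(Fermat's_little_theorem (aspacef K)) memvf. Qed.

Lemma frob_fix1 m : {in 1%VS, forall y : K, frob m y = y}.
Proof. by move=> _ /vlineP[a ->]; rewrite -[a *: 1]/(a%:A) frob_alg. Qed.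

Lemma frob_fixed_adjoinP x m : frob m x = x <-> (\dim <<1; x>> %| m)%N.
Proof.
apply: iff_trans (frob_fixed_subfieldP <<1; x>>%AS m).
split=> [fx | fixV]; [exact: frob_fix_adjoin (frob_fix1 m) fx | exact/fixV/memv_adjoin].
Qed.

End Frobenius.

Section RootDegree.

Variables (F : finFieldType) (K : fieldExtType F).

Lemma dim_adjoin_lt_size (P : {poly F}) y : P != 0 ->
  root (map_poly (in_alg K) P) y -> (\dim <<1; y>> < size P)%N.
Proof.
move=> nzP Py; have := dvdp_leq _ (minPoly_dvdp (alg_polyOver 1 P) Py).
rewrite map_poly_eq0 size_map_poly size_minPoly => /(_ nzP).
by rewrite dim_Fadjoin dimv1 muln1.
Qed.

Lemma dim_adjoin_irreducible (P : {poly F}) y : irreducible_poly P ->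
  root (map_poly (in_alg K) P) y -> \dim <<1; y>> = (size P).-1.
Proof.
move=> [_ irrP] Py.
have := minPoly_dvdp (alg_polyOver 1 P) Py.
have /polyOver1P[m Dm] := minPolyOver 1 y; rewrite Dm dvdp_map => mP.
have size_m : size m = (\dim <<1; y>>).+1.
  by rewrite -(size_map_poly (in_alg K)) -Dm size_minPoly dim_Fadjoin dimv1 muln1.
have /eqp_size <- : m %= P by rewrite irrP // size_m eqSS -lt0n adim_gt0.
by rewrite size_m.
Qed.

Lemma irreducible_root_dim (P : {poly F}) y : P != 0 ->
  root (map_poly (in_alg K) P) y -> (size P <= (\dim <<1; y>>).+1)%N ->
  irreducible_poly P.
Proof.
move=> nzP Py le_P_dim.
have factor_eqp Q : Q %| P -> root (map_poly (in_alg K) Q) y -> Q %= P.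
  move=> QP Qy; have nzQ : Q != 0 by apply: contraNneq nzP => Q0; rewrite -(dvd0p P) -Q0.
  rewrite -dvdp_size_eqp // eqn_leq dvdp_leq //=.
  exact: leq_trans le_P_dim (dim_adjoin_lt_size nzQ Qy).
split=> [|Q size_Q /dvdpP[R DP]].
  by rewrite (leq_trans _ (dim_adjoin_lt_size nzP Py)) // ltnS adim_gt0.
move: Py; rewrite {1}DP rmorphM rootM => /orP[Ry | Qy]; last first.
  by apply: factor_eqp; rewrite // DP dvdp_mull.
have RP : R %| P by rewrite DP dvdp_mulr.
have /andP[_ PR] := factor_eqp R RP Ry.
have nzR : R != 0 by apply: contraNneq nzP => R0; rewrite DP R0 mul0r.
by move: PR; rewrite {1}DP -{2}[R]mulr1 dvdp_mul2l // dvdp1 (negbTE size_Q).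
Qed.

End RootDegree.

Section FrobeniusPoly.

Variables (F : finFieldType) (K : fieldExtType F).

Lemma frob_polyE a (h : {poly K}) : frob_poly a h = map_poly (frob a) h.
Proof. by []. Qed.

Lemma size_frob_poly a (h : {poly K}) : size (frob_poly a h) = size h.
Proof. by rewrite frob_polyE size_map_poly. Qed.

Lemma size_prod_frob_poly k m (h : {poly K}) : size h = m.+1 ->
  size (\prod_(a < k) frob_poly a h) = (m * k).+1.
Proof.
move=> size_h; rewrite size_prod => [|a _]; last first.
  by rewrite -size_poly_gt0 size_frob_poly size_h.
under eq_bigr do rewrite size_frob_poly size_h.
by rewrite sum_nat_const card_ord mulnS -addnS addKn mulnC.
Qed.

Lemma map_frob_poly m a (h : {poly K}) :
  map_poly (frob m) (frob_poly a h) = frob_poly (m + a) h.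
Proof. by rewrite -map_poly_comp; apply: eq_map_poly => c; rewrite /= -frobD. Qed.

Lemma prod_frob_poly_over1 (h : {poly K}) :
  \prod_(a < \dim {:K}) frob_poly a h \is a polyOver 1%VS.
Proof.
have frob_prod : map_poly (frob 1) (\prod_(a < \dim {:K}) frob_poly a h) =
                 \prod_(a < \dim {:K}) frob_poly a h.
  rewrite rmorph_prod; under eq_bigr do rewrite /= map_frob_poly.
  have := adim_gt0 (aspacef K); case: (\dim _) (@frob_dim_full F K) => // k fixK _.
  rewrite big_ord_recr big_ord_recl /= mulrC; congr (_ * _).
  by rewrite add1n !frob_polyE; apply: eq_map_poly => c; rewrite fixK frob0.
by apply/polyOverP => i; rewrite mem1_frob -{2}frob_prod coef_map.
Qed.

End FrobeniusPoly.

Section AffineFrobeniusOrbit.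

Variables (F : finFieldType) (E : fieldExtType F) (n k e : nat) (a b theta y : E).
Hypotheses (coprime_nk : coprime n k) (fixed_a : frob k a = a) (fixed_b : frob k b = b).
Hypotheses (nz_a : a != 0) (fixed_theta : frob n theta = theta).
Hypotheses (moved_theta : frob 1 theta != theta) (thetaE : theta = a * y + b).
Hypothesis fixed_y : frob e y = y.

Let u := frob e a / a.
Let w := frob e b - u * b.
Let delta := theta - frob 1 theta.

Lemma frob_a_scale : frob e a = u * a.
Proof. by rewrite /u divfK. Qed.

Lemma frob_b_affine : frob e b = u * b + w.
Proof. by rewrite /w addrC subrK. Qed.

Lemma frob_theta_affine : frob e theta = u * theta + w.
Proof.
rewrite {1}thetaE rmorphD rmorphM /= fixed_y frob_a_scale frob_b_affine.
by rewrite thetaE mulrDr mulrA addrA.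
Qed.

Lemma fixed_affine_coefs_dvdk m : (k %| m)%N -> frob m u = u /\ frob m w = w.
Proof.
move=> /dvdnP[c ->]; have fixed_k z : frob k z = z -> frob (c * k) z = z.
  exact: frob_fix_mull.
have frob_u : frob k u = u by rewrite fmorph_div /= frobC fixed_a.
split; first exact: fixed_k.
by apply: fixed_k; rewrite rmorphB rmorphM /= frob_u frobC fixed_b.
Qed.

(* An exponent [m] which is [0] mod [k] and [1] mod [n] makes [frob m] act as
   the identity on [u] and [w] but as [frob 1] on [theta]. *)
Lemma frob_theta1_affine : frob e (frob 1 theta) = u * frob 1 theta + w.
Proof.
pose m := chinese n k 1 0.
have [fixed_u fixed_w] : frob m u = u /\ frob m w = w.
  by apply: fixed_affine_coefs_dvdk; rewrite /dvdn chinese_modr ?mod0n.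
have frob_m_theta : frob m theta = frob 1 theta.
  rewrite (frob_modn m fixed_theta) chinese_modl //.
  by rewrite -(frob_modn 1 fixed_theta).
by rewrite -frob_m_theta frobC frob_theta_affine rmorphD rmorphM /= fixed_u fixed_w.
Qed.

Lemma frob_delta_scale : frob e delta = u * delta.
Proof.
rewrite rmorphB /= frob_theta_affine frob_theta1_affine.
by rewrite mulrBr opprD addrACA subrr addr0.
Qed.

Lemma nz_delta : delta != 0.
Proof. by rewrite subr_eq0 eq_sym. Qed.

Lemma frob_n_delta : frob n delta = delta.
Proof. by rewrite rmorphB /= frobC fixed_theta. Qed.

Lemma fixed_affine_coefs : frob 1 u = u /\ frob 1 w = w.
Proof.
have [fixed_k_u fixed_k_w] := fixed_affine_coefs_dvdk (dvdnn k).
have fixed_n_u : frob n u = u.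
  have -> : u = frob e delta / delta by rewrite frob_delta_scale mulfK ?nz_delta.
  by rewrite fmorph_div /= frobC frob_n_delta.
have fixed_n_w : frob n w = w.
  have -> : w = frob e theta - u * theta by rewrite frob_theta_affine addrC addKr.
  by rewrite rmorphB rmorphM /= frobC fixed_theta fixed_n_u.
by split; apply: (frob_fix_coprime coprime_nk).
Qed.

Lemma fixed_affine_coefs_all m : frob m u = u /\ frob m w = w.
Proof.
have [fixed_u fixed_w] := fixed_affine_coefs.
by rewrite -[m]muln1; split; apply: frob_fix_mull.
Qed.

Lemma affine_scale_eq1 : u = 1.
Proof.
have [fixed_u _] := fixed_affine_coefs_all e.
have un : u ^+ n = 1.
  apply: (mulIf nz_delta); rewrite mul1r -(frob_iter_scale n fixed_u frob_delta_scale).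
  by rewrite mulnC frob_fix_mull // frob_n_delta.
have uk : u ^+ k = 1.
  apply: (mulIf nz_a); rewrite mul1r -(frob_iter_scale k fixed_u frob_a_scale).
  by rewrite mulnC frob_fix_mull.
by rewrite -[u]expr1 -(eqP coprime_nk) expr_gcdn_eq1.
Qed.

Lemma affine_shift_eq0 : w = 0.
Proof.
have [_ fixed_w] := fixed_affine_coefs_all e.
have shift z : frob e z = u * z + w -> frob e z = z + w.
  by rewrite affine_scale_eq1 mul1r.
have wn : w *+ n = 0.
  apply: (addrI theta); rewrite addr0 -(frob_iter_shift n fixed_w (shift _ frob_theta_affine)).
  by rewrite mulnC frob_fix_mull.
have wk : w *+ k = 0.
  apply: (addrI b); rewrite addr0 -(frob_iter_shift k fixed_w (shift _ frob_b_affine)).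
  by rewrite mulnC frob_fix_mull.
by rewrite -[w]mulr1n -(eqP coprime_nk) mulrn_gcdn_eq0.
Qed.

Lemma frob_fixed_affine :
  [/\ frob e theta = theta, frob e a = a & frob e b = b].
Proof.
rewrite frob_theta_affine frob_a_scale frob_b_affine.
by rewrite affine_scale_eq1 affine_shift_eq0 !mul1r !addr0.
Qed.

End AffineFrobeniusOrbit.

Section AffineComposition.

Variables (F : finFieldType) (L E : fieldExtType F) (iota : {rmorphism L -> E}).
Hypothesis iota_alg : forall c : F, iota c%:A = c%:A.
Variables (n k : nat) (f : {poly F}) (alpha beta : L) (theta : E).
Hypotheses (n_gt1 : (1 < n)%N) (coprime_nk : coprime n k) (dimL : \dim {:L} = k).
Hypotheses (irr_f : irreducible_poly f) (size_f : size f = n.+1) (nz_alpha : alpha != 0).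
Hypothesis f_theta : root (map_poly (in_alg E) f) theta.

Let g := map_poly (in_alg L) f \Po ('X * alpha%:P + beta%:P).
Let x := (theta - iota beta) / iota alpha.

Lemma frob_iota m c : frob m (iota c) = iota (frob m c).
Proof. by rewrite /frob rmorphXn. Qed.

Lemma map_in_alg_iota (P : {poly F}) :
  map_poly (in_alg E) P = map_poly iota (map_poly (in_alg L) P).
Proof. by rewrite -map_poly_comp; apply: eq_map_poly => c /=; rewrite iota_alg. Qed.

Lemma size_comp_affine : size g = n.+1.
Proof.
rewrite size_comp_poly2 ?size_map_poly // size_polyDl size_XmulC //.
exact: leq_ltn_trans (size_polyC_leq1 _) _.
Qed.

Lemma root_prod_frob_poly (P : {poly F}) : (0 < k)%N ->
  map_poly (in_alg L) P = \prod_(a < k) frob_poly a g ->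
  root (map_poly (in_alg E) P) x.
Proof.
case: k => // k' _ DP; rewrite map_in_alg_iota DP rmorph_prod big_ord_recl rootM.
apply/orP; left; rewrite frob_polyE map_poly_id => [|c _]; last by rewrite frob0.
rewrite /root /= /g map_comp_poly horner_comp -map_in_alg_iota rmorphD rmorphM /=.
rewrite map_polyX !map_polyC !hornerE /x divfK ?fmorph_eq0 // subrK.
exact: f_theta.
Qed.

Lemma dim_adjoin_theta : \dim <<1; theta>> = n.
Proof. by rewrite (dim_adjoin_irreducible irr_f f_theta) size_f. Qed.

Lemma frob_fixed_root_comp e : frob e x = x ->
  [/\ frob e theta = theta, frob e alpha = alpha & frob e beta = beta].
Proof.
move=> fixed_x; have fixed_k c : frob k (iota c) = iota c.
  by rewrite frob_iota -dimL frob_dim_full.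
have fixed_n_theta : frob n theta = theta.
  by apply/frob_fixed_adjoinP; rewrite dim_adjoin_theta.
have moved_theta : frob 1 theta != theta.
  by apply/eqP => /frob_fixed_adjoinP; rewrite dim_adjoin_theta dvdn1 gtn_eqF.
have thetaE : theta = iota alpha * x + iota beta.
  by rewrite /x mulrC divfK ?fmorph_eq0 // subrK.
have nz_iota_alpha : iota alpha != 0 by rewrite fmorph_eq0.
have [-> fa fb] := frob_fixed_affine coprime_nk (fixed_k _) (fixed_k _)
  nz_iota_alpha fixed_n_theta moved_theta thetaE fixed_x.
by split=> //; apply: (fmorph_inj iota); rewrite -frob_iota.
Qed.

Lemma dvdn_frob_fixed_root_comp e : <<<<1%VS; alpha>>; beta>>%VS = fullv ->
  frob e x = x -> (n * k %| e)%N.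
Proof.
move=> gen /frob_fixed_root_comp[fixed_theta fixed_alpha fixed_beta].
rewrite Gauss_dvd //; apply/andP; split.
  by rewrite -dim_adjoin_theta; apply/frob_fixed_adjoinP.
rewrite -dimL -gen; apply/(frob_fixed_subfieldP <<<<1; alpha>>; beta>>%AS).
exact: frob_fix_adjoin (frob_fix_adjoin (frob_fix1 e) fixed_alpha) fixed_beta.
Qed.

Lemma irreducible_of_adjoin_full (P : {poly F}) :
  <<<<1%VS; alpha>>; beta>>%VS = fullv ->
  map_poly (in_alg L) P = \prod_(a < k) frob_poly a g -> irreducible_poly P.
Proof.
move=> gen DP; have k_gt0 : (0 < k)%N by rewrite -dimL adim_gt0.
have size_P : size P = (n * k).+1.
  by rewrite -(size_map_poly (in_alg L)) DP (size_prod_frob_poly _ size_comp_affine).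
have P_x := root_prod_frob_poly k_gt0 DP.
apply: irreducible_root_dim P_x _; first by rewrite -size_poly_gt0 size_P.
rewrite size_P ltnS dvdn_leq ?adim_gt0 // (dvdn_frob_fixed_root_comp gen) //.
exact/frob_fixed_adjoinP.
Qed.

Lemma adjoin_full_of_irreducible (P : {poly F}) : irreducible_poly P ->
  map_poly (in_alg L) P = \prod_(a < k) frob_poly a g ->
  <<<<1%VS; alpha>>; beta>>%VS = fullv.
Proof.
move=> irr_P DP; have k_gt0 : (0 < k)%N by rewrite -dimL adim_gt0.
have size_P : size P = (n * k).+1.
  by rewrite -(size_map_poly (in_alg L)) DP (size_prod_frob_poly _ size_comp_affine).
pose S := <<<<1; alpha>>; beta>>%AS; pose d := \dim S.
have fixed_S : {in S, forall z, frob (d * n) z = z}.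
  by apply/frob_fixed_subfieldP; rewrite dvdn_mulr.
have fixed_alpha : frob (d * n) alpha = alpha.
  by apply/fixed_S/(subvP (subv_adjoin _ beta))/memv_adjoin.
have fixed_beta : frob (d * n) beta = beta by apply/fixed_S/memv_adjoin.
have fixed_theta : frob (d * n) theta = theta.
  by apply/frob_fixed_adjoinP; rewrite dim_adjoin_theta dvdn_mull.
have /frob_fixed_adjoinP : frob (d * n) x = x.
  by rewrite fmorph_div rmorphB /= !frob_iota fixed_alpha fixed_beta fixed_theta.
rewrite (dim_adjoin_irreducible irr_P (root_prod_frob_poly k_gt0 DP)) size_P /=.
rewrite [(d * n)%N]mulnC dvdn_pmul2l ?(ltnW n_gt1) // => /(dvdn_leq (adim_gt0 S)) le_kd.
by apply/eqP; rewrite eqEdim subvf dimL.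
Qed.

End AffineComposition.

Lemma exists_root_ext (F : finFieldType) (L : fieldExtType F) (f : {poly F}) :
  (1 < size f)%N ->
  exists (E : fieldExtType F) (iota : {rmorphism L -> E}) (theta : E),
    (forall c : F, iota c%:A = c%:A) /\ root (map_poly (in_alg E) f) theta.
Proof.
move=> size_f; pose fL := map_poly (in_alg L) f : {poly FinFieldExtType L}.
have nz_fL : fL != 0 by rewrite map_poly_eq0 -size_poly_gt0 ltnW.
have [M [rs Drs _]] := FinSplittingFieldFor nz_fL.
have size_fM : size (map_poly (in_alg M) fL) = size f by rewrite !size_map_poly.
case: rs Drs => [|z rs] Drs.
  move/eqp_size: Drs; rewrite big_nil size_poly1 size_fM => size_f1.
  by rewrite size_f1 in size_f.
exists (baseFieldType M), (in_alg M), z; split=> //.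
have : root (map_poly (in_alg M) fL) z.
  by rewrite (eqp_root Drs) root_prod_XsubC mem_head.
by rewrite -map_poly_comp.
Qed.

Theorem theorem1 (F : finFieldType) (L : fieldExtType F) (n k : nat)
  (f : {poly F}) (alpha beta : L) :
  (1 < n)%N -> (1 <= k)%N -> coprime n k -> \dim {:L} = k ->
  irreducible_poly f -> size f = n.+1 -> alpha != 0 ->
  let g := map_poly (in_alg L) f \Po ('X * alpha%:P + beta%:P) in
  let FF := \prod_(a < k) frob_poly a g in
  size FF = (n * k).+1 /\
  FF \is a polyOver (1%VS : {vspace L}) /\
  (forall P : {poly F}, map_poly (in_alg L) P = FF ->
     (irreducible_poly P <-> <<<<1%VS; alpha>>; beta>>%VS = fullv)).
Proof.
move=> n_gt1 _ coprime_nk dimL irr_f size_f nz_alpha g FF.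
have size_f_gt1 : (1 < size f)%N by rewrite size_f ltnW.
have [E [iota [theta [iota_alg f_theta]]]] := exists_root_ext L size_f_gt1.
split; first exact: (size_prod_frob_poly k (size_comp_affine beta size_f nz_alpha)).
split; first by rewrite /FF -dimL prod_frob_poly_over1.
move=> P DP; split=> [irr_P | gen].
  exact: (adjoin_full_of_irreducible iota_alg n_gt1 dimL irr_f size_f nz_alpha
           f_theta irr_P DP).
exact: (irreducible_of_adjoin_full iota_alg n_gt1 coprime_nk dimL irr_f size_f
         nz_alpha f_theta gen DP).
Qed.
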